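(* Let $\varepsilon\neq0$, $\varepsilon'$ be real constants and consider the almost-Riemannian structure on $\mathbb{R}^2$ with orthonormal frame $F_1=(\varepsilon z+\frac{y^2}{2}+\varepsilon' y^3)\frac{\partial}{\partial z}$, $F_2=\frac{\partial}{\partial y}$, with Hamiltonian $H=\frac12\big(p_z^2(\varepsilon z+\frac{y^2}{2}+\varepsilon' y^3)^2+p_y^2\big)$. The normal extremals with initial condition $(y,z,p_y,p_z)|_{t=0}=(0,0,\pm1,\lambda)$, as $|\lambda|\to+\infty$, admit the expansions $$y(t)=\eta Y^0(t/\eta)+\eta^2 Y^1(t/\eta)+o(\eta^2),\qquad z(t)=\eta^3Z^0(t/\eta)+\eta^4Z^1(t/\eta)+o(\eta^4),$$ where $\eta=1/\sqrt{|\lambda|}$, $(Y^0,Z^0,P_Y^0,P_Z^0)$ solves (dots denote derivatives with respect to $s=t/\eta$) $$\dot Y^0=P_Y^0,\quad \dot P_Y^0=-\tfrac12(P_Z^0)^2(Y^0)^3,\quad \dot Z^0=\tfrac14P_Z^0(Y^0)^4,\quad \dot P_Z^0=0,$$ with initial condition $(0,0,\pm1,\mathrm{sign}(\lambda))$, and $(Y^1,Z^1,P_Y^1,P_Z^1)$ solves $$\dot Y^1=P_Y^1,\qquad \dot Z^1=\tfrac14P_Z^1(Y^0)^4+P_Z^0\big((Y^0)^3Y^1+\varepsilon Z^0(Y^0)^2+\varepsilon'(Y^0)^5\big),$$ $$\dot P_Y^1=-P_Z^0P_Z^1(Y^0)^3-(P_Z^0)^2\big(\tfrac32(Y^0)^2Y^1+\varepsilon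 Z^0Y^0+\tfrac52\varepsilon'(Y^0)^4\big),\qquad \dot P_Z^1=-\tfrac12(P_Z^0)^2\varepsilon(Y^0)^2,$$ with initial condition $(0,0,0,0)$. In particular, for $P_Y^0(0)=\pm1$, $P_Z^0\equiv\pm1$: $Y^0(s)=-P_Y^0(0)\sqrt2\,\mathrm{cn}(K+s)$ and $Z^0(s)=\frac{P_Z^0}{3}\big(s+2\,\mathrm{sn}(K+s)\mathrm{cn}(K+s)\mathrm{dn}(K+s)\big)$.
   Context: $K=\int_0^{\pi/2}\frac{d\varphi}{\sqrt{1-\frac12\sin^2\varphi}}$ and $\mathrm{sn},\mathrm{cn},\mathrm{dn}$ are Jacobi elliptic functions of modulus $1/\sqrt2$. Normal extremals are solutions of the Hamiltonian system $\dot y=\partial H/\partial p_y$, $\dot z=\partial H/\partial p_z$, $\dot p_y=-\partial H/\partial y$, $\dot p_z=-\partial H/\partial z$. *)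

From Stdlib Require Import Reals Lra ClassicalEpsilon.
Open Scope R_scope.

(** Total Riemann integral: the value of [RiemannInt pr] for any proof of
    integrability (the value does not depend on the proof); arbitrary otherwise. *)
Definition Rint (f : R -> R) (a b : R) : R :=
  epsilon (inhabits 0) (fun I => exists pr : Riemann_integrable f a b, RiemannInt pr = I).

(** Incomplete elliptic integral of the first kind with modulus k = 1/sqrt 2,
    F(phi) = int_0^phi dtheta / sqrt(1 - 1/2 sin^2 theta). *)
Definition Fell (phi : R) : R :=
  Rint (fun th => / sqrt (1 - / 2 * (sin th) ^ 2)) 0 phi.

Definition K : R := Fell (PI / 2).

Definition am (u : R) : R := epsilon (inhabits 0) (fun phi => Fell phi = u).

Definition sn (u : R) : R := sin (am u).
Definition cn (u : R) : R := cos (am u).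
Definition dn (u : R) : R := sqrt (1 - / 2 * (sn u) ^ 2).

Definition Ham (eps eps' y z py pz : R) : R :=
  / 2 * (pz ^ 2 * (eps * z + y ^ 2 / 2 + eps' * y ^ 3) ^ 2 + py ^ 2).

(** Normal extremal: solution (on all of R) of the Hamiltonian system
    y' = dH/dp_y, z' = dH/dp_z, p_y' = - dH/dy, p_z' = - dH/dz,
    the partial derivatives being taken at the current point. *)
Definition normal_extremal (eps eps' : R) (y z py pz : R -> R) : Prop :=
  forall t, exists a b c d : R,
    derivable_pt_lim y t a /\
    derivable_pt_lim (fun q => Ham eps eps' (y t) (z t) q (pz t)) (py t) a /\
    derivable_pt_lim z t b /\
    derivable_pt_lim (fun q => Ham eps eps' (y t) (z t) (py t) q) (pz t) b /\
    derivable_pt_lim py t c /\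
    derivable_pt_lim (fun q => Ham eps eps' q (z t) (py t) (pz t)) (y t) (- c) /\
    derivable_pt_lim pz t d /\
    derivable_pt_lim (fun q => Ham eps eps' (y t) q (py t) (pz t)) (z t) (- d).

Definition order0_system (Y0 Z0 PY0 PZ0 : R -> R) : Prop :=
  forall s,
    derivable_pt_lim Y0 s (PY0 s) /\
    derivable_pt_lim PY0 s (- / 2 * (PZ0 s) ^ 2 * (Y0 s) ^ 3) /\
    derivable_pt_lim Z0 s (/ 4 * PZ0 s * (Y0 s) ^ 4) /\
    derivable_pt_lim PZ0 s 0.

Definition order1_system (eps eps' : R) (Y0 Z0 PY0 PZ0 Y1 Z1 PY1 PZ1 : R -> R) : Prop :=
  forall s,
    derivable_pt_lim Y1 s (PY1 s) /\
    derivable_pt_lim Z1 s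
      (/ 4 * PZ1 s * (Y0 s) ^ 4
       + PZ0 s * ((Y0 s) ^ 3 * Y1 s + eps * Z0 s * (Y0 s) ^ 2 + eps' * (Y0 s) ^ 5)) /\
    derivable_pt_lim PY1 s
      (- PZ0 s * PZ1 s * (Y0 s) ^ 3
       - (PZ0 s) ^ 2 * (3 / 2 * (Y0 s) ^ 2 * Y1 s + eps * Z0 s * Y0 s
                        + 5 / 2 * eps' * (Y0 s) ^ 4)) /\
    derivable_pt_lim PZ1 s (- / 2 * (PZ0 s) ^ 2 * eps * (Y0 s) ^ 2).

(* Rescale time by [eta = |lam|^(-1/2)], [y] by [eta], [z] by [eta^3] and [p_z] by [eta^(-2)]:
   the Hamiltonian system becomes a polynomial system [X' = F(eta, X)] whose value at [eta = 0]
   is the order-zero system and whose first-order Taylor coefficient at [eta = 0] gives the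
   order-one system.  The remainder [R = X - X0 - eta X1] therefore satisfies
   [|R'| <= C (|R| + eta^2)] as long as [R] stays bounded, so by Gronwall its energy
   [|R|^2] is [O(eta^4)] on [0, S], and a continuity argument removes the proviso
   [|R| <= 1] once [eta] is small.  The closed form of [Y0, Z0] comes from the fact that
   [-sigma sqrt 2 cn (K + s)] solves [Y'' = - Y^3 / 2] (the Jacobi derivatives for
   [k^2 = 1/2]), together with uniqueness for this cubic oscillator. *)

From Stdlib Require Import Reals Lra Psatz ClassicalEpsilon Classical.
Open Scope R_scope.

Lemma derivable_pt_lim_eq_val f x a b :
  derivable_pt_lim f x a -> a = b -> derivable_pt_lim f x b.
Proof. now intros H <-. Qed.

Lemma derive_comp f g x a b :
  derivable_pt_lim g x a -> derivable_pt_lim f (g x) b ->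
  derivable_pt_lim (fun t => f (g t)) x (b * a).
Proof. exact (derivable_pt_lim_comp g f x a b). Qed.

Lemma derive_pow f x a k :
  derivable_pt_lim f x a ->
  derivable_pt_lim (fun t => f t ^ k) x (INR k * f x ^ pred k * a).
Proof. intros; apply (derive_comp (fun u => u ^ k)); auto using derivable_pt_lim_pow. Qed.

Lemma derive_sin f x a :
  derivable_pt_lim f x a -> derivable_pt_lim (fun t => sin (f t)) x (cos (f x) * a).
Proof. intros; apply (derive_comp sin); auto using derivable_pt_lim_sin. Qed.

Lemma derive_cos f x a :
  derivable_pt_lim f x a -> derivable_pt_lim (fun t => cos (f t)) x (- sin (f x) * a).
Proof. intros; apply (derive_comp cos); auto using derivable_pt_lim_cos. Qed.

Lemma derive_exp f x a :
  derivable_pt_lim f x a -> derivable_pt_lim (fun t => exp (f t)) x (exp (f x) * a).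
Proof. intros; apply (derive_comp exp); auto using derivable_pt_lim_exp. Qed.

Lemma derive_sqrt f x a :
  0 < f x -> derivable_pt_lim f x a ->
  derivable_pt_lim (fun t => sqrt (f t)) x (/ (2 * sqrt (f x)) * a).
Proof. intros; apply (derive_comp sqrt); auto using derivable_pt_lim_sqrt. Qed.

Lemma derive_scale f c x a :
  derivable_pt_lim f (c * x) a -> derivable_pt_lim (fun t => f (c * t)) x (a * c).
Proof.
  intros H; apply (derive_comp f (fun t => c * t)); auto.
  apply (derivable_pt_lim_eq_val _ _ (0 * x + c * 1)); [|ring].
  apply derivable_pt_lim_mult; [apply derivable_pt_lim_const | apply derivable_pt_lim_id].
Qed.

Ltac derive_step :=
  first
    [ apply derivable_pt_lim_id | apply derivable_pt_lim_const | eassumption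
    | match goal with
      | |- derivable_pt_lim ?f _ _ =>
          match goal with H : forall x : R, derivable_pt_lim f x _ |- _ => apply H end
      end
    | eapply derive_scale | eapply derivable_pt_lim_plus | eapply derivable_pt_lim_minus
    | eapply derivable_pt_lim_opp | eapply derivable_pt_lim_mult | eapply derive_pow
    | eapply derive_sin | eapply derive_cos | eapply derive_exp ].

Ltac derive := eapply derivable_pt_lim_eq_val; [repeat derive_step | cbv beta].

(** * Gronwall and continuity arguments *)

Lemma derivable_continuity f f' : (forall s, derivable_pt_lim f s (f' s)) -> continuity f.
Proof. intros H x; apply derivable_continuous_pt; exists (f' x); apply H. Qed.

Lemma continuity_bounded f a b :
  a <= b -> continuity f -> exists B, forall s, a <= s <= b -> Rabs (f s) <= B.
Proof.
  intros Hab Hf.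
  destruct (continuity_ab_maj (fun s => Rabs (f s)) a b Hab) as [M [HM _]]; eauto.
  intros c _; apply continuity_pt_comp with (f2 := Rabs); [apply Hf | apply Rcontinuity_abs].
Qed.

Lemma derivative_zero_constant f : (forall s, derivable_pt_lim f s 0) -> forall s, f s = f 0.
Proof.
  intros H s; destruct (Rtotal_order 0 s) as [Hs|[<-|Hs]]; auto.
  - destruct (MVT_cor2 f (fun _ => 0) 0 s Hs (fun c _ => H c)) as [c [Hc _]]; lra.
  - destruct (MVT_cor2 f (fun _ => 0) s 0 Hs (fun c _ => H c)) as [c [Hc _]]; lra.
Qed.

(* [(E s + b/a) exp(-a s)] is nonincreasing on [0, S]. *)
Lemma gronwall (E E' : R -> R) a b S :
  0 < a -> 0 <= b -> 0 <= S ->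
  (forall s, derivable_pt_lim E s (E' s)) ->
  (forall s, 0 <= s <= S -> E' s <= a * E s + b) ->
  E S <= (E 0 + b / a) * exp (a * S).
Proof.
  intros Ha Hb HS HD HI.
  set (h := fun s => (E s + b / a) * exp (- a * s)).
  assert (Hh : forall s, derivable_pt_lim h s ((E' s - a * E s - b) * exp (- a * s))).
  { intro s; unfold h; derive. field; lra. }
  assert (HhS : h S <= h 0).
  { destruct HS as [HS|<-]; [|lra].
    destruct (MVT_cor2 h _ 0 S HS (fun c _ => Hh c)) as [c [Hc Hc']].
    assert (E' c <= a * E c + b) by (apply HI; lra).
    assert ((E' c - a * E c - b) * exp (- a * c) <= 0) by (pose proof (exp_pos (- a * c)); nra).
    nra. }
  unfold h in HhS; rewrite Rmult_0_r, exp_0, Rmult_1_r in HhS.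
  assert (Hinv : exp (- a * S) * exp (a * S) = 1)
    by (rewrite <- exp_plus, <- exp_0; f_equal; ring).
  pose proof (exp_pos (a * S)).
  apply Rmult_le_compat_r with (r := exp (a * S)) in HhS; [|lra].
  rewrite Rmult_assoc, Hinv, Rmult_1_r in HhS.
  assert (0 <= b / a) by (apply Rmult_le_pos; [lra | left; apply Rinv_0_lt_compat; lra]).
  nra.
Qed.

Lemma continuity_pt_nbhd f x e :
  continuity_pt f x -> 0 < e ->
  exists d, 0 < d /\ forall u, Rabs (u - x) < d -> Rabs (f u - f x) < e.
Proof.
  intros Hc He; destruct (Hc e He) as [d [Hd Hd']]; exists d; split; auto.
  intros u Hu; destruct (Req_dec u x) as [->|Hux].
  - rewrite Rminus_diag, Rabs_R0; auto.
  - apply Hd'; repeat split; auto.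
Qed.

(* A continuity argument at the supremum [T] of the times up to which [E < c]. *)
Lemma continuity_bootstrap (E : R -> R) S c :
  continuity E -> E 0 < c ->
  (forall t, 0 <= t <= S -> (forall u, 0 <= u <= t -> E u <= c) -> E t < c) ->
  forall t, 0 <= t <= S -> E t < c.
Proof.
  intros HE H0 Hstep t0 Ht0; apply NNPP; intros Hbad.
  set (A := fun t => forall u, 0 <= u <= t -> E u < c).
  assert (HA0 : A 0) by (intros u Hu; replace u with 0 by lra; exact H0).
  assert (HAt0 : is_upper_bound A t0).
  { intros t Ht; apply Rnot_lt_le; intros Hlt; apply Hbad, Ht; lra. }
  destruct (completeness A (ex_intro _ t0 HAt0) (ex_intro _ 0 HA0)) as [T [HT HTmin]].
  pose proof (HT 0 HA0); pose proof (HTmin t0 HAt0).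
  assert (Hbelow : forall u, 0 <= u < T -> E u < c).
  { intros u Hu; apply NNPP; intros Hu'.
    assert (Hub : is_upper_bound A u)
      by (intros t Ht; apply Rnot_lt_le; intros Hlt; apply Hu', Ht; lra).
    specialize (HTmin u Hub); lra. }
  assert (HET : E T <= c).
  { apply Rnot_lt_le; intros Hgt.
    destruct (continuity_pt_nbhd E T (E T - c) (HE T)) as [d [Hd Hd']]; [lra|].
    destruct (Rle_lt_dec T 0) as [HT0|HT0]; [replace T with 0 in Hgt by lra; lra|].
    set (v := Rmax 0 (T - d / 2)).
    assert (Hv : 0 <= v < T) by (split; [apply Rmax_l | apply Rmax_lub_lt; lra]).
    assert (Hvd : Rabs (v - T) < d)
      by (assert (T - d / 2 <= v) by apply Rmax_r; rewrite Rabs_left; lra).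
    pose proof (Hbelow v Hv); specialize (Hd' v Hvd); apply Rabs_def2 in Hd'; lra. }
  assert (HTc : E T < c).
  { apply Hstep; [lra|]; intros u Hu.
    destruct (Rlt_le_dec u T); [left; apply Hbelow; lra | replace u with T by lra; exact HET]. }
  destruct (continuity_pt_nbhd E T (c - E T) (HE T)) as [d [Hd Hd']]; [lra|].
  assert (HAT : A (T + d / 2)).
  { intros u Hu; destruct (Rlt_le_dec u T); [apply Hbelow; lra|].
    assert (Hud : Rabs (u - T) < d) by (rewrite Rabs_right; lra).
    specialize (Hd' u Hud); apply Rabs_def2 in Hd'; lra. }
  specialize (HT _ HAT); lra.
Qed.

Lemma gronwall_bootstrap (E E' : R -> R) a b c S :
  0 < a -> 0 <= b -> 0 <= S -> E 0 = 0 -> b / a * exp (a * S) < c ->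
  (forall s, derivable_pt_lim E s (E' s)) ->
  (forall s, 0 <= s <= S -> E s <= c -> E' s <= a * E s + b) ->
  forall s, 0 <= s <= S -> E s <= b / a * exp (a * S).
Proof.
  intros Ha Hb HS HE0 Hsmall HD HI.
  assert (Hgron : forall t, 0 <= t <= S -> (forall u, 0 <= u <= t -> E u <= c) ->
                    E t <= b / a * exp (a * S)).
  { intros t Ht Hu.
    eapply Rle_trans; [apply (gronwall E E' a b t); auto; [lra|]|].
    - intros u Hut; apply HI; [lra | apply Hu; lra].
    - rewrite HE0, Rplus_0_l; apply Rmult_le_compat_l.
      + apply Rmult_le_pos; [lra | left; apply Rinv_0_lt_compat; lra].
      + destruct (Req_dec t S) as [->|]; [lra | left; apply exp_increasing; nra]. }
  assert (Hlt : forall t, 0 <= t <= S -> E t < c).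
  { apply continuity_bootstrap; [exact (derivable_continuity _ _ HD) | |].
    - pose proof (exp_pos (a * S)).
      assert (0 <= b / a) by (apply Rmult_le_pos; [lra | left; apply Rinv_0_lt_compat; lra]).
      nra.
    - intros t Ht Hu; specialize (Hgron t Ht Hu); lra. }
  intros s Hs; apply Hgron; auto; intros u Hu; left; apply Hlt; lra.
Qed.

(** * The Jacobi amplitude *)

Lemma continuity_Riemann_integrable f a b : continuity f -> Riemann_integrable f a b.
Proof.
  intros Hf; destruct (Rle_dec a b).
  - apply continuity_implies_RiemannInt; auto.
  - apply RiemannInt_P1, continuity_implies_RiemannInt; auto; lra.
Qed.

Lemma Rint_RiemannInt f a b (pr : Riemann_integrable f a b) : Rint f a b = RiemannInt pr.
Proof.
  unfold Rint.
  destruct (epsilon_spec (inhabits 0)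
              (fun I => exists pr : Riemann_integrable f a b, RiemannInt pr = I)
              (ex_intro _ _ (ex_intro _ pr eq_refl))) as [pr' <-].
  apply RiemannInt_P5.
Qed.

Lemma Rint_derivative f : continuity f -> forall x, derivable_pt_lim (fun x => Rint f 0 x) x (f x).
Proof.
  intros Hf x.
  set (A := Rabs x + 1).
  assert (HA : - A <= A) by (unfold A; pose proof (Rabs_pos x); lra).
  assert (Cf : forall y, - A <= y <= A -> continuity_pt f y) by auto.
  set (P := primitive HA (FTC_P1 HA Cf)).
  assert (HP : forall z, - A <= z <= A ->
             P z = RiemannInt (continuity_Riemann_integrable f (- A) z Hf)).
  { intros z Hz; unfold P, primitive.
    destruct (Rle_dec (- A) z); [|lra]; destruct (Rle_dec z A); [|lra].
    apply RiemannInt_P5. }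
  assert (Hx : - A < x < A)
    by (unfold A; pose proof (Rle_abs x); pose proof (Rle_abs (- x)); rewrite Rabs_Ropp in *; lra).
  apply derivable_pt_lim_locally_ext with (f := fun z => P z - P 0) (a := - A) (b := A); auto.
  - intros z Hz.
    rewrite (Rint_RiemannInt f 0 z (continuity_Riemann_integrable f 0 z Hf)), !HP by lra.
    rewrite <- (RiemannInt_P26 (continuity_Riemann_integrable f (- A) 0 Hf)
                  (continuity_Riemann_integrable f 0 z Hf)
                  (continuity_Riemann_integrable f (- A) z Hf)).
    ring.
  - apply (derivable_pt_lim_eq_val _ _ (f x - 0)); [|ring].
    apply derivable_pt_lim_minus;
      [apply (RiemannInt_P28 HA Cf); lra | apply derivable_pt_lim_const].
Qed.

(* Since [F' >= 1], [F] is expanding, hence its inverse [G] is 1-Lipschitz and the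
   mean value point [c] between [G u] and [G (u + h)] tends to [G u]. *)
Lemma derivable_pt_lim_inverse (F g G : R -> R) :
  (forall x, derivable_pt_lim F x (g x)) -> (forall x, 1 <= g x) -> continuity g ->
  (forall u, F (G u) = u) -> forall u, derivable_pt_lim G u (/ g (G u)).
Proof.
  intros HF Hg1 Hg HFG u eps Heps.
  assert (Hginv : continuity_pt (fun x => / g x) (G u))
    by (apply continuity_pt_inv; [apply Hg | specialize (Hg1 (G u)); lra]).
  destruct (continuity_pt_nbhd _ _ eps Hginv Heps) as [d [Hd Hd']].
  exists (mkposreal d Hd); intros h Hh0 Hhd; simpl in Hhd.
  set (a0 := G u) in *; set (a1 := G (u + h)).
  assert (Hh : h = F a1 - F a0) by (unfold a0, a1; rewrite !HFG; ring).
  assert (Hmvt : exists c, F a1 - F a0 = g c * (a1 - a0) /\ Rabs (c - a0) <= Rabs (a1 - a0)).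
  { destruct (Rtotal_order a0 a1) as [Hlt|[Heq|Hlt]].
    - destruct (MVT_cor2 F g a0 a1 Hlt (fun c _ => HF c)) as [c [Hc Hc']].
      exists c; split; auto; rewrite !Rabs_right; lra.
    - exists a0; split; [rewrite Heq; ring | rewrite Heq, Rminus_diag, Rabs_R0; lra].
    - destruct (MVT_cor2 F g a1 a0 Hlt (fun c _ => HF c)) as [c [Hc Hc']].
      exists c; split; [lra | rewrite !Rabs_left1; lra]. }
  destruct Hmvt as [c [Hc Hca]].
  assert (Hgc : 1 <= g c) by apply Hg1.
  assert (Hq : (a1 - a0) / h = / g c)
    by (rewrite Hh, Hc; field; split; [lra | intros H; apply Hh0; rewrite Hh, Hc, H; ring]).
  rewrite Hq; apply Hd'.
  assert (Rabs (a1 - a0) <= Rabs h).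
  { rewrite Hh, Hc, Rabs_mult, (Rabs_right (g c)) by lra.
    pose proof (Rabs_pos (a1 - a0)); nra. }
  lra.
Qed.

(* [dn u] is [ell_delta (am u)] by definition, and [Fell] integrates [/ ell_delta]. *)
Definition ell_delta (th : R) : R := sqrt (1 - / 2 * sin th ^ 2).

Lemma ell_delta_radicand_bounds th : / 2 <= 1 - / 2 * sin th ^ 2 <= 1.
Proof.
  pose proof (pow2_ge_0 (sin th)); pose proof (pow2_ge_0 (cos th)); pose proof (sin2 th).
  unfold Rsqr in *; simpl in *; nra.
Qed.

Lemma ell_delta_pos th : 0 < ell_delta th.
Proof. apply sqrt_lt_R0; pose proof (ell_delta_radicand_bounds th); lra. Qed.

Lemma ell_delta_sq th : ell_delta th * ell_delta th = 1 - / 2 * sin th ^ 2.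
Proof. apply sqrt_sqrt; pose proof (ell_delta_radicand_bounds th); lra. Qed.

Lemma ell_delta_le_1 th : ell_delta th <= 1.
Proof.
  pose proof (ell_delta_sq th); pose proof (ell_delta_pos th);
  pose proof (ell_delta_radicand_bounds th); nra.
Qed.

Lemma derive_ell_delta f x a :
  derivable_pt_lim f x a ->
  derivable_pt_lim (fun t => ell_delta (f t)) x
    (- sin (f x) * cos (f x) * a / (2 * ell_delta (f x))).
Proof.
  intros Hf; unfold ell_delta.
  pose proof (ell_delta_radicand_bounds (f x)); pose proof (ell_delta_pos (f x)).
  eapply derivable_pt_lim_eq_val; [apply derive_sqrt; [cbv beta; lra|]; repeat derive_step|].
  unfold ell_delta in *; field; lra.
Qed.

Lemma ell_delta_continuity : continuity ell_delta.
Proof.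
  intro th; apply derivable_continuous_pt; eexists.
  apply (derive_ell_delta (fun t => t) th 1), derivable_pt_lim_id.
Qed.

Lemma inv_ell_delta_continuity : continuity (fun th => / ell_delta th).
Proof.
  intro th; apply continuity_pt_inv; [apply ell_delta_continuity | apply Rgt_not_eq, ell_delta_pos].
Qed.

Lemma Fell_derivative x : derivable_pt_lim Fell x (/ ell_delta x).
Proof. exact (Rint_derivative _ inv_ell_delta_continuity x). Qed.

Lemma inv_ell_delta_ge_1 th : 1 <= / ell_delta th.
Proof.
  pose proof (ell_delta_pos th); pose proof (ell_delta_le_1 th).
  rewrite <- Rinv_1; apply Rinv_le_contravar; lra.
Qed.

Lemma Fell_expanding x y : x <= y -> y - x <= Fell y - Fell x.
Proof.
  intros [Hxy|<-]; [|lra].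
  destruct (MVT_cor2 Fell _ x y Hxy (fun c _ => Fell_derivative c)) as [c [Hc _]].
  pose proof (inv_ell_delta_ge_1 c); nra.
Qed.

Lemma Fell_0 : Fell 0 = 0.
Proof.
  unfold Fell; rewrite (Rint_RiemannInt _ 0 0 (RiemannInt_P7 _ 0)); apply RiemannInt_P9.
Qed.

Lemma Fell_surjective u : exists phi, Fell phi = u.
Proof.
  set (A := Rabs u + 1).
  assert (HuA : - A < u < A)
    by (unfold A; pose proof (Rle_abs u); pose proof (Rle_abs (- u)); rewrite Rabs_Ropp in *; lra).
  pose proof (Fell_expanding 0 A ltac:(lra)); pose proof (Fell_expanding (- A) 0 ltac:(lra)).
  rewrite Fell_0 in *.
  destruct (IVT_cor (fun p => Fell p - u) (- A) A) as [phi [_ Hphi]]; [| lra | nra |].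
  - intro p; apply continuity_pt_minus; [|apply continuity_pt_const; intros ? ?; auto].
    apply derivable_continuous_pt; exists (/ ell_delta p); apply Fell_derivative.
  - exists phi; lra.
Qed.

Lemma Fell_am u : Fell (am u) = u.
Proof. exact (epsilon_spec (inhabits 0) (fun phi => Fell phi = u) (Fell_surjective u)). Qed.

Lemma am_Fell x : am (Fell x) = x.
Proof.
  pose proof (Fell_am (Fell x)) as H.
  destruct (Rle_dec x (am (Fell x))) as [Hle|Hle];
    [pose proof (Fell_expanding _ _ Hle) | pose proof (Fell_expanding (am (Fell x)) x ltac:(lra))];
    lra.
Qed.

Lemma am_K : am K = PI / 2.
Proof. apply am_Fell. Qed.

Lemma am_derivative u : derivable_pt_lim am u (ell_delta (am u)).
Proof.
  eapply derivable_pt_lim_eq_val.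
  - apply (derivable_pt_lim_inverse Fell (fun th => / ell_delta th)).
    + exact Fell_derivative.
    + exact inv_ell_delta_ge_1.
    + exact inv_ell_delta_continuity.
    + exact Fell_am.
  - rewrite Rinv_inv; reflexivity.
Qed.

(** * The order-zero solution *)

Definition cubic_oscillator (Y P : R -> R) : Prop :=
  forall s, derivable_pt_lim Y s (P s) /\ derivable_pt_lim P s (- / 2 * Y s ^ 3).

Lemma cubic_energy_ineq y y2 d p B :
  Rabs y <= B -> Rabs y2 <= B ->
  d * p * (2 - (y ^ 2 + y * y2 + y2 ^ 2)) <= (1 + 3 * B ^ 2) * (d ^ 2 + p ^ 2).
Proof.
  intros Hy Hy2.
  assert (Hw0 : 0 <= y ^ 2 + y * y2 + y2 ^ 2)
    by (pose proof (pow2_ge_0 (2 * y + y2)); pose proof (pow2_ge_0 y2); nra).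
  assert (Hw : y ^ 2 + y * y2 + y2 ^ 2 <= 3 * B ^ 2).
  { assert (y * y2 <= Rabs y * Rabs y2) by (rewrite <- Rabs_mult; apply Rle_abs).
    rewrite <- (pow2_abs y), <- (pow2_abs y2); pose proof (Rabs_pos y); pose proof (Rabs_pos y2).
    nra. }
  pose proof (pow2_ge_0 (d + p)); pose proof (pow2_ge_0 (d - p)); nra.
Qed.

(* Gronwall for the energy [(Y - Y2)^2 + (P - P2)^2], using
   [Y^3 - Y2^3 = (Y - Y2) (Y^2 + Y Y2 + Y2^2)]. *)
Lemma cubic_oscillator_unique_forward Y P Y2 P2 :
  cubic_oscillator Y P -> cubic_oscillator Y2 P2 -> Y 0 = Y2 0 -> P 0 = P2 0 ->
  forall T, 0 <= T -> Y T = Y2 T.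
Proof.
  intros H H2 E1 E2 T HT.
  assert (dY : forall s, derivable_pt_lim Y s (P s)) by apply H.
  assert (dP : forall s, derivable_pt_lim P s (- / 2 * Y s ^ 3)) by apply H.
  assert (dY2 : forall s, derivable_pt_lim Y2 s (P2 s)) by apply H2.
  assert (dP2 : forall s, derivable_pt_lim P2 s (- / 2 * Y2 s ^ 3)) by apply H2.
  destruct (continuity_bounded Y 0 T HT (derivable_continuity _ _ dY)) as [B1 HB1].
  destruct (continuity_bounded Y2 0 T HT (derivable_continuity _ _ dY2)) as [B2 HB2].
  set (B := Rabs B1 + Rabs B2).
  set (E := fun s => (Y s - Y2 s) ^ 2 + (P s - P2 s) ^ 2).
  assert (HE : E T <= (E 0 + 0 / (1 + 3 * B ^ 2)) * exp ((1 + 3 * B ^ 2) * T)).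
  { apply (gronwall E (fun s => (Y s - Y2 s) * (P s - P2 s)
                                  * (2 - (Y s ^ 2 + Y s * Y2 s + Y2 s ^ 2))));
      auto; [nra | lra | intro s; unfold E; derive; simpl; field |].
    intros s Hs; unfold E; rewrite Rplus_0_r; apply cubic_energy_ineq.
    - specialize (HB1 s Hs); pose proof (Rle_abs B1); pose proof (Rabs_pos B2); unfold B; lra.
    - specialize (HB2 s Hs); pose proof (Rle_abs B2); pose proof (Rabs_pos B1); unfold B; lra. }
  unfold E in HE; rewrite E1, E2, !Rminus_diag in HE.
  replace ((0 ^ 2 + 0 ^ 2 + 0 / (1 + 3 * B ^ 2)) * exp ((1 + 3 * B ^ 2) * T)) with 0 in HE
    by (field; nra).
  pose proof (pow2_ge_0 (Y T - Y2 T)); pose proof (pow2_ge_0 (P T - P2 T)).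
  assert (Y T - Y2 T = 0) by nra; lra.
Qed.

Lemma cubic_oscillator_reverse Y P :
  cubic_oscillator Y P -> cubic_oscillator (fun t => Y (- t)) (fun t => - P (- t)).
Proof.
  intros H s; destruct (H (- s)) as [dY dP].
  assert (dopp : derivable_pt_lim (fun t => - t) s (- 1))
    by apply derivable_pt_lim_opp, derivable_pt_lim_id.
  split.
  - apply (derivable_pt_lim_eq_val _ _ _ _ (derive_comp Y _ s _ _ dopp dY)); ring.
  - apply (derivable_pt_lim_eq_val _ _ _ _
             (derivable_pt_lim_opp _ _ _ (derive_comp P _ s _ _ dopp dP))); ring.
Qed.

Lemma cubic_oscillator_unique Y P Y2 P2 :
  cubic_oscillator Y P -> cubic_oscillator Y2 P2 -> Y 0 = Y2 0 -> P 0 = P2 0 ->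
  forall T, Y T = Y2 T.
Proof.
  intros H H2 E1 E2 T; destruct (Rle_dec 0 T).
  - exact (cubic_oscillator_unique_forward Y P Y2 P2 H H2 E1 E2 T r).
  - replace T with (- - T) by ring.
    apply (cubic_oscillator_unique_forward _ _ _ _
             (cubic_oscillator_reverse _ _ H) (cubic_oscillator_reverse _ _ H2));
      rewrite ?Ropp_0, ?E1, ?E2; auto; lra.
Qed.

Lemma am_shift_derivative s : derivable_pt_lim (fun t => am (K + t)) s (dn (K + s)).
Proof.
  apply (derivable_pt_lim_eq_val _ _ (dn (K + s) * (0 + 1))); [|ring].
  apply (derive_comp am (fun t => K + t)); [|apply am_derivative].
  apply derivable_pt_lim_plus; [apply derivable_pt_lim_const | apply derivable_pt_lim_id].
Qed.

Lemma sn_shift_derivative s :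
  derivable_pt_lim (fun t => sn (K + t)) s (cn (K + s) * dn (K + s)).
Proof. exact (derive_sin _ _ _ (am_shift_derivative s)). Qed.

Lemma cn_shift_derivative s :
  derivable_pt_lim (fun t => cn (K + t)) s (- sn (K + s) * dn (K + s)).
Proof. exact (derive_cos _ _ _ (am_shift_derivative s)). Qed.

Lemma dn_shift_derivative s :
  derivable_pt_lim (fun t => dn (K + t)) s (- / 2 * sn (K + s) * cn (K + s)).
Proof.
  pose proof (ell_delta_pos (am (K + s))).
  eapply derivable_pt_lim_eq_val; [apply (derive_ell_delta _ _ _ (am_shift_derivative s))|].
  unfold dn, sn, cn, ell_delta in *; field; lra.
Qed.

Lemma dn_sq u : dn u * dn u = 1 - / 2 * sn u ^ 2.
Proof. apply ell_delta_sq. Qed.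

Lemma sn_cn_sq u : sn u ^ 2 + cn u ^ 2 = 1.
Proof. unfold sn, cn; pose proof (sin2_cos2 (am u)); unfold Rsqr in *; lra. Qed.

Lemma jacobi_cubic_oscillator sigma :
  sigma ^ 2 = 1 ->
  cubic_oscillator (fun s => - sigma * sqrt 2 * cn (K + s))
                   (fun s => sigma * sqrt 2 * sn (K + s) * dn (K + s)).
Proof.
  intros Hsigma s.
  pose proof sn_shift_derivative; pose proof cn_shift_derivative; pose proof dn_shift_derivative.
  assert (Hsqrt2 : sqrt 2 * sqrt 2 = 2) by (apply sqrt_sqrt; lra).
  pose proof (dn_sq (K + s)); pose proof (sn_cn_sq (K + s)).
  split; derive; set (S := sn (K + s)) in *; set (C := cn (K + s)) in *;
    set (Dn := dn (K + s)) in *.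
  - ring.
  - transitivity (sigma * sqrt 2 * C * (Dn * Dn - / 2 * S ^ 2)); [field|].
    rewrite H2; replace (S ^ 2) with (1 - C ^ 2) by lra.
    transitivity (sigma ^ 2 * (sqrt 2 * sqrt 2) * (sigma * sqrt 2 * C ^ 3) / 2); [|field].
    rewrite Hsigma, Hsqrt2; field.
Qed.

Lemma shifted_Z_derivative s :
  derivable_pt_lim (fun t => / 3 * (t + 2 * sn (K + t) * cn (K + t) * dn (K + t))) s
    (cn (K + s) ^ 4).
Proof.
  pose proof sn_shift_derivative; pose proof cn_shift_derivative; pose proof dn_shift_derivative.
  pose proof (dn_sq (K + s)); pose proof (sn_cn_sq (K + s)).
  derive; set (S := sn (K + s)) in *; set (C := cn (K + s)) in *; set (Dn := dn (K + s)) in *.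
  transitivity (/ 3 * (1 + 2 * ((C ^ 2 - S ^ 2) * (Dn * Dn) - S ^ 2 * C ^ 2 / 2))); [field|].
  rewrite H2; replace (S ^ 2) with (1 - C ^ 2) by lra; field.
Qed.

Lemma sn_K : sn K = 1.
Proof. unfold sn; rewrite am_K; apply sin_PI2. Qed.

Lemma cn_K : cn K = 0.
Proof. unfold cn; rewrite am_K; apply cos_PI2. Qed.

Lemma sqrt2_dn_K : sqrt 2 * dn K = 1.
Proof.
  unfold dn; rewrite sn_K, <- sqrt_mult by lra.
  replace (2 * (1 - / 2 * 1 ^ 2)) with 1 by field; apply sqrt_1.
Qed.

Lemma order0_closed_form Y0 Z0 PY0 PZ0 :
  order0_system Y0 Z0 PY0 PZ0 -> Y0 0 = 0 -> Z0 0 = 0 -> PY0 0 ^ 2 = 1 -> PZ0 0 ^ 2 = 1 ->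
  forall s,
    Y0 s = - PY0 0 * sqrt 2 * cn (K + s) /\
    Z0 s = PZ0 s / 3 * (s + 2 * sn (K + s) * cn (K + s) * dn (K + s)).
Proof.
  intros H0 HY0 HZ0 Hsigma Htau.
  assert (HPZ : forall s, PZ0 s = PZ0 0) by (apply derivative_zero_constant; apply H0).
  assert (HY : forall s, Y0 s = - PY0 0 * sqrt 2 * cn (K + s)).
  { apply (cubic_oscillator_unique Y0 PY0 _ (fun s => PY0 0 * sqrt 2 * sn (K + s) * dn (K + s)));
      [| apply (jacobi_cubic_oscillator _ Hsigma) | |].
    - intro s; destruct (H0 s) as (dY & dP & _); split; auto.
      rewrite HPZ, Htau, Rmult_1_r in dP; exact dP.
    - rewrite Rplus_0_r, cn_K, HY0; ring.
    - rewrite Rplus_0_r, sn_K, Rmult_1_r, Rmult_assoc, sqrt2_dn_K; ring. }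
  intro s; split; [apply HY|].
  assert (HZ : forall t, derivable_pt_lim
                 (fun t => Z0 t - PZ0 0 * (/ 3 * (t + 2 * sn (K + t) * cn (K + t) * dn (K + t))))
                 t 0).
  { intro t; pose proof shifted_Z_derivative; destruct (H0 t) as (_ & _ & dZ & _).
    derive; rewrite HY, HPZ.
    replace ((- PY0 0 * sqrt 2 * cn (K + t)) ^ 4)
      with (PY0 0 ^ 2 * PY0 0 ^ 2 * ((sqrt 2 * sqrt 2) * (sqrt 2 * sqrt 2)) * cn (K + t) ^ 4)
      by ring.
    rewrite Hsigma, sqrt_sqrt by lra; field. }
  pose proof (derivative_zero_constant _ HZ s); cbv beta in *.
  rewrite Rplus_0_r, cn_K, HZ0 in H; rewrite HPZ; lra.
Qed.

(** * First-order expansions *)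

Lemma Rabs_mult_le a b A B : Rabs a <= A -> Rabs b <= B -> Rabs (a * b) <= A * B.
Proof.
  intros Ha Hb; rewrite Rabs_mult.
  apply Rmult_le_compat; auto using Rabs_pos.
Qed.

Lemma Rabs_triang3 a b c : Rabs (a + b + c) <= Rabs a + Rabs b + Rabs c.
Proof.
  pose proof (Rabs_triang (a + b) c); pose proof (Rabs_triang a b); lra.
Qed.

(* With [t = n s], [y = n Y], [z = n^3 Z], [p_z = Q / n^2] the Hamiltonian system reads
   [Y' = P], [Z' = scaled_dz], [P' = scaled_dp], [Q' = scaled_dq]. *)
Definition scaled_W (e f n y z : R) : R := / 2 * y ^ 2 + n * (e * z + f * y ^ 3).
Definition scaled_dz (e f n y z q : R) : R := q * scaled_W e f n y z ^ 2.
Definition scaled_dp (e f n y z q : R) : R :=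
  - q ^ 2 * scaled_W e f n y z * (y + 3 * n * f * y ^ 2).
Definition scaled_dq (e f n y z q : R) : R := - n * e * q ^ 2 * scaled_W e f n y z.

Definition scaled_dz0 (y q : R) : R := / 4 * q * y ^ 4.
Definition scaled_dp0 (y q : R) : R := - / 2 * q ^ 2 * y ^ 3.
Definition scaled_dz1 (e f y z q y1 q1 : R) : R :=
  / 4 * q1 * y ^ 4 + q * (y ^ 3 * y1 + e * z * y ^ 2 + f * y ^ 5).
Definition scaled_dp1 (e f y z q y1 q1 : R) : R :=
  - q * q1 * y ^ 3 - q ^ 2 * (3 / 2 * y ^ 2 * y1 + e * z * y + 5 / 2 * f * y ^ 4).
Definition scaled_dq1 (e y q : R) : R := - / 2 * q ^ 2 * e * y ^ 2.

Section FirstOrderExpansion.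

Variables (I : Type) (D : I -> Prop) (n rho : I -> R).
Hypothesis n_small : forall i, D i -> Rabs (n i) <= 1.
Hypothesis rho_small : forall i, D i -> 0 <= rho i <= 4.

Definition bounded_on (u : I -> R) : Prop :=
  exists B, forall i, D i -> Rabs (u i) <= B.

Definition expansion (u u0 u1 : I -> R) : Prop :=
  exists C, forall i, D i ->
    Rabs (u0 i) <= C /\ Rabs (u1 i) <= C /\
    Rabs (u i - u0 i - n i * u1 i) <= C * (rho i + n i ^ 2).

Lemma expansion_weight_bounds i : D i -> 0 <= rho i + n i ^ 2 <= 5.
Proof.
  intros Di; pose proof (rho_small i Di); pose proof (n_small i Di).
  rewrite <- pow2_abs; pose proof (Rabs_pos (n i)); nra.
Qed.

Lemma expansion_eq u u0 u1 v0 v1 :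
  expansion u u0 u1 -> (forall i, u0 i = v0 i) -> (forall i, u1 i = v1 i) ->
  expansion u v0 v1.
Proof.
  intros [C HC] E0 E1; exists C; intros i Di.
  rewrite <- E0, <- E1; auto.
Qed.

Lemma expansion_const c : expansion (fun _ => c) (fun _ => c) (fun _ => 0).
Proof.
  exists (Rabs c); intros i Di; repeat split; try lra.
  - rewrite Rabs_R0; apply Rabs_pos.
  - replace (c - c - n i * 0) with 0 by ring; rewrite Rabs_R0.
    pose proof (expansion_weight_bounds i Di); pose proof (Rabs_pos c); nra.
Qed.

Lemma expansion_param : expansion n (fun _ => 0) (fun _ => 1).
Proof.
  exists 1; intros i Di; repeat split; rewrite ?Rabs_R0, ?Rabs_R1; try lra.
  replace (n i - 0 - n i * 1) with 0 by ring; rewrite Rabs_R0.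
  pose proof (expansion_weight_bounds i Di); lra.
Qed.

Lemma expansion_of_bounded u u0 u1 :
  bounded_on u0 -> bounded_on u1 ->
  (forall i, D i -> Rabs (u i - u0 i - n i * u1 i) <= rho i) ->
  expansion u u0 u1.
Proof.
  intros [B0 HB0] [B1 HB1] Hu; exists (1 + Rabs B0 + Rabs B1); intros i Di.
  pose proof (HB0 i Di); pose proof (HB1 i Di); pose proof (Hu i Di).
  pose proof (Rle_abs B0); pose proof (Rle_abs B1); pose proof (Rabs_pos B0);
  pose proof (Rabs_pos B1); pose proof (pow2_ge_0 (n i)); pose proof (rho_small i Di).
  repeat split; nra.
Qed.

Lemma expansion_add u v u0 u1 v0 v1 :
  expansion u u0 u1 -> expansion v v0 v1 ->
  expansion (fun i => u i + v i) (fun i => u0 i + v0 i) (fun i => u1 i + v1 i).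
Proof.
  intros [Cu Hu] [Cv Hv]; exists (Cu + Cv); intros i Di.
  destruct (Hu i Di) as (Hu0 & Hu1 & Hdu), (Hv i Di) as (Hv0 & Hv1 & Hdv).
  replace (u i + v i - (u0 i + v0 i) - n i * (u1 i + v1 i))
    with ((u i - u0 i - n i * u1 i) + (v i - v0 i - n i * v1 i)) by ring.
  repeat split; (eapply Rle_trans; [apply Rabs_triang | lra]).
Qed.

Lemma expansion_opp u u0 u1 :
  expansion u u0 u1 -> expansion (fun i => - u i) (fun i => - u0 i) (fun i => - u1 i).
Proof.
  intros [C HC]; exists C; intros i Di.
  replace (- u i - - u0 i - n i * - u1 i) with (- (u i - u0 i - n i * u1 i)) by ring.
  rewrite !Rabs_Ropp; auto.
Qed.

Lemma expansion_sub u v u0 u1 v0 v1 :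
  expansion u u0 u1 -> expansion v v0 v1 ->
  expansion (fun i => u i - v i) (fun i => u0 i - v0 i) (fun i => u1 i - v1 i).
Proof. intros Hu Hv; exact (expansion_add _ _ _ _ _ _ Hu (expansion_opp _ _ _ Hv)). Qed.

(* The product rule: [u v - u0 v0 - n (u0 v1 + u1 v0)] splits as
   [(u - a) v + a (v - b) + n^2 u1 v1] with [a = u0 + n u1], [b = v0 + n v1]. *)
Lemma expansion_mul u v u0 u1 v0 v1 :
  expansion u u0 u1 -> expansion v v0 v1 ->
  expansion (fun i => u i * v i) (fun i => u0 i * v0 i)
    (fun i => u0 i * v1 i + u1 i * v0 i).
Proof.
  intros [Cu Hu] [Cv Hv]; exists (10 * Cu * Cv); intros i Di.
  destruct (Hu i Di) as (Hu0 & Hu1 & Hdu), (Hv i Di) as (Hv0 & Hv1 & Hdv).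
  pose proof (expansion_weight_bounds i Di) as Hh.
  set (h := rho i + n i ^ 2) in *.
  pose proof (Rabs_pos (u0 i)); pose proof (Rabs_pos (v0 i)).
  assert (Hn2 : Rabs (n i ^ 2) <= h).
  { rewrite Rabs_right by (apply Rle_ge, pow2_ge_0).
    unfold h; pose proof (rho_small i Di); lra. }
  assert (Ha : Rabs (u0 i + n i * u1 i) <= 2 * Cu).
  { eapply Rle_trans; [apply Rabs_triang|].
    pose proof (Rabs_mult_le _ _ _ _ (n_small i Di) Hu1); lra. }
  assert (Hvb : Rabs (v i) <= 7 * Cv).
  { replace (v i) with (v0 i + n i * v1 i + (v i - v0 i - n i * v1 i)) by ring.
    eapply Rle_trans; [apply Rabs_triang3|].
    pose proof (Rabs_mult_le _ _ _ _ (n_small i Di) Hv1); nra. }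
  replace (u i * v i - u0 i * v0 i - n i * (u0 i * v1 i + u1 i * v0 i))
    with ((u i - u0 i - n i * u1 i) * v i + (u0 i + n i * u1 i) * (v i - v0 i - n i * v1 i)
          + n i ^ 2 * (u1 i * v1 i)) by ring.
  pose proof (Rabs_mult_le _ _ _ _ Hdu Hvb); pose proof (Rabs_mult_le _ _ _ _ Ha Hdv).
  pose proof (Rabs_mult_le _ _ _ _ Hn2 (Rabs_mult_le _ _ _ _ Hu1 Hv1)).
  pose proof (Rabs_mult_le _ _ _ _ Hu0 Hv0); pose proof (Rabs_mult_le _ _ _ _ Hu0 Hv1);
  pose proof (Rabs_mult_le _ _ _ _ Hu1 Hv0).
  repeat split.
  - nra.
  - eapply Rle_trans; [apply Rabs_triang|]; nra.
  - eapply Rle_trans; [apply Rabs_triang3|]; nra.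
Qed.

Lemma expansion_pow u u0 u1 k :
  expansion u u0 u1 ->
  expansion (fun i => u i ^ k) (fun i => u0 i ^ k) (fun i => INR k * u0 i ^ pred k * u1 i).
Proof.
  intros Hu; induction k as [|k IH].
  - eapply expansion_eq; [apply (expansion_const 1)| |]; intro i; simpl; ring.
  - eapply expansion_eq; [exact (expansion_mul _ _ _ _ _ _ Hu IH)| |]; intro i.
    + reflexivity.
    + rewrite S_INR; destruct k; simpl; ring.
Qed.

Ltac expand :=
  repeat first
    [ eassumption | apply expansion_param | apply expansion_const | apply expansion_pow
    | apply expansion_opp | apply expansion_sub | apply expansion_mul | apply expansion_add ].

Lemma scaled_field_expansion e f (y z q y0 z0 q0 y1 z1 q1 : I -> R) :
  expansion y y0 y1 -> expansion z z0 z1 -> expansion q q0 q1 ->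
  expansion (fun i => scaled_dz e f (n i) (y i) (z i) (q i))
    (fun i => scaled_dz0 (y0 i) (q0 i))
    (fun i => scaled_dz1 e f (y0 i) (z0 i) (q0 i) (y1 i) (q1 i)) /\
  expansion (fun i => scaled_dp e f (n i) (y i) (z i) (q i))
    (fun i => scaled_dp0 (y0 i) (q0 i))
    (fun i => scaled_dp1 e f (y0 i) (z0 i) (q0 i) (y1 i) (q1 i)) /\
  expansion (fun i => scaled_dq e f (n i) (y i) (z i) (q i))
    (fun i => 0) (fun i => scaled_dq1 e (y0 i) (q0 i)).
Proof.
  intros Hy Hz Hq.
  unfold scaled_dz, scaled_dp, scaled_dq, scaled_W, scaled_dz0, scaled_dp0, scaled_dz1,
    scaled_dp1, scaled_dq1.
  (* [expand] computes the coefficients from the shape of the polynomial; [field] then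
     identifies them with the stated ones. *)
  repeat split; (eapply expansion_eq; [expand | intro i; simpl; field | intro i; simpl; field]).
Qed.

End FirstOrderExpansion.

(** * The remainder estimate *)

Lemma hamilton_equations eps eps' y z py pz :
  normal_extremal eps eps' y z py pz ->
  forall t,
    derivable_pt_lim y t (py t) /\
    derivable_pt_lim z t (pz t * (eps * z t + y t ^ 2 / 2 + eps' * y t ^ 3) ^ 2) /\
    derivable_pt_lim py t
      (- pz t ^ 2 * (eps * z t + y t ^ 2 / 2 + eps' * y t ^ 3) * (y t + 3 * eps' * y t ^ 2)) /\
    derivable_pt_lim pz t (- pz t ^ 2 * (eps * z t + y t ^ 2 / 2 + eps' * y t ^ 3) * eps).
Proof.
  intros H t; destruct (H t) as (a & b & c & d & dy & Hy & dz & Hz & dpy & Hpy & dpz & Hpz).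
  unfold Ham in *.
  set (w := eps * z t + y t ^ 2 / 2 + eps' * y t ^ 3).
  assert (Ha : a = py t).
  { apply (uniqueness_limite _ _ _ _ Hy); clear Hy; derive; simpl; field. }
  assert (Hb : b = pz t * w ^ 2).
  { apply (uniqueness_limite _ _ _ _ Hz); clear Hz; derive; unfold w; simpl; field. }
  assert (Hc : - c = pz t ^ 2 * w * (y t + 3 * eps' * y t ^ 2)).
  { apply (uniqueness_limite _ _ _ _ Hpy); clear Hpy; derive; unfold w; simpl; field. }
  assert (Hd : - d = pz t ^ 2 * w * eps).
  { apply (uniqueness_limite _ _ _ _ Hpz); clear Hpz; derive; unfold w; simpl; field. }
  subst a b; repeat split; auto.
  - replace (- pz t ^ 2 * w * _) with c by lra; exact dpy.
  - replace (- pz t ^ 2 * w * eps) with d by lra; exact dpz.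
Qed.

Lemma rescaled_extremal eps eps' y z py pz eta :
  0 < eta -> normal_extremal eps eps' y z py pz ->
  forall s,
    let Y := y (eta * s) / eta in
    let Z := z (eta * s) / eta ^ 3 in
    let Q := eta ^ 2 * pz (eta * s) in
    derivable_pt_lim (fun t => y (eta * t) / eta) s (py (eta * s)) /\
    derivable_pt_lim (fun t => z (eta * t) / eta ^ 3) s (scaled_dz eps eps' eta Y Z Q) /\
    derivable_pt_lim (fun t => py (eta * t)) s (scaled_dp eps eps' eta Y Z Q) /\
    derivable_pt_lim (fun t => eta ^ 2 * pz (eta * t)) s (scaled_dq eps eps' eta Y Z Q).
Proof.
  intros Heta H s Y Z Q.
  assert (dy : forall t, derivable_pt_lim y t (py t)) by apply (hamilton_equations _ _ _ _ _ _ H).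
  assert (dz : forall t, derivable_pt_lim z t _) by apply (hamilton_equations _ _ _ _ _ _ H).
  assert (dpy : forall t, derivable_pt_lim py t _) by apply (hamilton_equations _ _ _ _ _ _ H).
  assert (dpz : forall t, derivable_pt_lim pz t _) by apply (hamilton_equations _ _ _ _ _ _ H).
  unfold Y, Z, Q, scaled_dz, scaled_dp, scaled_dq, scaled_W.
  repeat split; unfold Rdiv; derive; simpl; field; lra.
Qed.

Lemma remainder_energy_ineq C n ry rz rp rq dz dp dq :
  1 <= C ->
  Rabs dz <= C * (Rabs ry + Rabs rz + Rabs rp + Rabs rq + n ^ 2) ->
  Rabs dp <= C * (Rabs ry + Rabs rz + Rabs rp + Rabs rq + n ^ 2) ->
  Rabs dq <= C * (Rabs ry + Rabs rz + Rabs rp + Rabs rq + n ^ 2) ->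
  2 * (ry * rp + rz * dz + rp * dp + rq * dq)
    <= 12 * C * (ry ^ 2 + rz ^ 2 + rp ^ 2 + rq ^ 2) + C * n ^ 4.
Proof.
  intros HC Hz Hp Hq.
  set (rho := Rabs ry + Rabs rz + Rabs rp + Rabs rq) in *.
  set (G := C * (rho + n ^ 2)) in *.
  pose proof (Rabs_pos ry); pose proof (Rabs_pos rz); pose proof (Rabs_pos rp);
    pose proof (Rabs_pos rq); pose proof (pow2_ge_0 n).
  assert (Hprod : forall r d, Rabs d <= G -> r * d <= Rabs r * G).
  { intros r d Hd; eapply Rle_trans; [apply Rle_abs|].
    rewrite Rabs_mult; apply Rmult_le_compat_l; auto using Rabs_pos. }
  assert (Hrp : Rabs rp <= G) by (unfold G, rho; nra).
  pose proof (Hprod ry rp Hrp); pose proof (Hprod rz dz Hz);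
    pose proof (Hprod rp dp Hp); pose proof (Hprod rq dq Hq).
  assert (Hrho : rho ^ 2 <= 4 * (ry ^ 2 + rz ^ 2 + rp ^ 2 + rq ^ 2)).
  { unfold rho; rewrite <- (pow2_abs ry), <- (pow2_abs rz), <- (pow2_abs rp), <- (pow2_abs rq).
    pose proof (pow2_ge_0 (Rabs ry - Rabs rz)); pose proof (pow2_ge_0 (Rabs ry - Rabs rp));
    pose proof (pow2_ge_0 (Rabs ry - Rabs rq)); pose proof (pow2_ge_0 (Rabs rz - Rabs rp));
    pose proof (pow2_ge_0 (Rabs rz - Rabs rq)); pose proof (pow2_ge_0 (Rabs rp - Rabs rq)); nra. }
  assert (2 * rho * n ^ 2 <= rho ^ 2 + n ^ 4) by (pose proof (pow2_ge_0 (rho - n ^ 2)); nra).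
  assert (2 * (ry * rp + rz * dz + rp * dp + rq * dq) <= 2 * rho * G) by (unfold rho; lra).
  unfold G in *; nra.
Qed.

Lemma sum_abs_le_4 a b c d :
  a ^ 2 + b ^ 2 + c ^ 2 + d ^ 2 <= 1 -> Rabs a + Rabs b + Rabs c + Rabs d <= 4.
Proof.
  intros H.
  assert (Hle1 : forall r, r ^ 2 <= 1 -> Rabs r <= 1)
    by (intros r Hr; rewrite <- pow2_abs in Hr; pose proof (Rabs_pos r); nra).
  pose proof (pow2_ge_0 a); pose proof (pow2_ge_0 b); pose proof (pow2_ge_0 c);
    pose proof (pow2_ge_0 d).
  pose proof (Hle1 a ltac:(lra)); pose proof (Hle1 b ltac:(lra)); pose proof (Hle1 c ltac:(lra));
    pose proof (Hle1 d ltac:(lra)); lra.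
Qed.

Lemma bounded_on_continuous (I : Type) (D : I -> Prop) (time : I -> R) g S :
  0 <= S -> continuity g -> (forall i, D i -> 0 <= time i <= S) ->
  bounded_on I D (fun i => g (time i)).
Proof.
  intros HS Hg Htime; destruct (continuity_bounded g 0 S HS Hg) as [B HB].
  exists B; auto.
Qed.

Definition eta (lam : R) : R := / sqrt (Rabs lam).

Lemma eta_pos lam : lam <> 0 -> 0 < eta lam.
Proof. intros; apply Rinv_0_lt_compat, sqrt_lt_R0, Rabs_pos_lt; auto. Qed.

Lemma eta_sq lam : lam <> 0 -> eta lam ^ 2 = / Rabs lam.
Proof.
  intros Hlam; unfold eta; rewrite pow_inv; f_equal.
  rewrite <- Rsqr_pow2; apply Rsqr_sqrt, Rabs_pos.
Qed.

Section Remainder.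

Variables (eps eps' sigma tau : R) (y z py pz : R -> R -> R).
Variables (Y0 Z0 PY0 PZ0 Y1 Z1 PY1 PZ1 : R -> R).
Hypothesis Htau : tau = 1 \/ tau = -1.
Hypothesis Hext : forall lam : R, lam <> 0 ->
  normal_extremal eps eps' (y lam) (z lam) (py lam) (pz lam) /\
  y lam 0 = 0 /\ z lam 0 = 0 /\ py lam 0 = sigma /\ pz lam 0 = lam.
Hypothesis H0 : order0_system Y0 Z0 PY0 PZ0.
Hypothesis H0i : Y0 0 = 0 /\ Z0 0 = 0 /\ PY0 0 = sigma /\ PZ0 0 = tau.
Hypothesis H1 : order1_system eps eps' Y0 Z0 PY0 PZ0 Y1 Z1 PY1 PZ1.
Hypothesis H1i : Y1 0 = 0 /\ Z1 0 = 0 /\ PY1 0 = 0 /\ PZ1 0 = 0.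

Lemma eta_large lam : 1 <= tau * lam ->
  lam <> 0 /\ 0 < eta lam <= 1 /\ eta lam ^ 2 = / (tau * lam) /\ eta lam ^ 2 * lam = tau.
Proof.
  intros Hlam.
  assert (Habs : Rabs lam = tau * lam)
    by (destruct Htau as [-> | ->]; [rewrite Rabs_right | rewrite Rabs_left]; lra).
  assert (Hl0 : lam <> 0) by (intros ->; lra).
  pose proof (eta_pos lam Hl0); pose proof (eta_sq lam Hl0) as Hsq; rewrite Habs in Hsq.
  repeat split; auto; try lra.
  - assert (eta lam ^ 2 <= 1) by (rewrite Hsq, <- Rinv_1; apply Rinv_le_contravar; lra). nra.
  - rewrite Hsq; destruct Htau as [-> | ->]; field; lra.
Qed.

Definition rescaled_y lam t := y lam (eta lam * t) / eta lam.
Definition rescaled_z lam t := z lam (eta lam * t) / eta lam ^ 3.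
Definition rescaled_q lam t := eta lam ^ 2 * pz lam (eta lam * t).

Definition rem_y lam t := rescaled_y lam t - Y0 t - eta lam * Y1 t.
Definition rem_z lam t := rescaled_z lam t - Z0 t - eta lam * Z1 t.
Definition rem_p lam t := py lam (eta lam * t) - PY0 t - eta lam * PY1 t.
Definition rem_q lam t := rescaled_q lam t - PZ0 t - eta lam * PZ1 t.

Definition defect_z lam t :=
  scaled_dz eps eps' (eta lam) (rescaled_y lam t) (rescaled_z lam t) (rescaled_q lam t)
  - scaled_dz0 (Y0 t) (PZ0 t) - eta lam * scaled_dz1 eps eps' (Y0 t) (Z0 t) (PZ0 t) (Y1 t) (PZ1 t).
Definition defect_p lam t :=
  scaled_dp eps eps' (eta lam) (rescaled_y lam t) (rescaled_z lam t) (rescaled_q lam t)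
  - scaled_dp0 (Y0 t) (PZ0 t) - eta lam * scaled_dp1 eps eps' (Y0 t) (Z0 t) (PZ0 t) (Y1 t) (PZ1 t).
Definition defect_q lam t :=
  scaled_dq eps eps' (eta lam) (rescaled_y lam t) (rescaled_z lam t) (rescaled_q lam t)
  - 0 - eta lam * scaled_dq1 eps (Y0 t) (PZ0 t).

Definition rem_energy lam t :=
  rem_y lam t ^ 2 + rem_z lam t ^ 2 + rem_p lam t ^ 2 + rem_q lam t ^ 2.
Definition rem_size lam t :=
  Rabs (rem_y lam t) + Rabs (rem_z lam t) + Rabs (rem_p lam t) + Rabs (rem_q lam t).

Lemma rem_size_bounds lam t :
  0 <= rem_size lam t /\ Rabs (rem_y lam t) <= rem_size lam t /\
  Rabs (rem_z lam t) <= rem_size lam t /\ Rabs (rem_q lam t) <= rem_size lam t.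
Proof.
  unfold rem_size.
  pose proof (Rabs_pos (rem_y lam t)); pose proof (Rabs_pos (rem_z lam t));
    pose proof (Rabs_pos (rem_p lam t)); pose proof (Rabs_pos (rem_q lam t)).
  repeat split; lra.
Qed.

Lemma remainder_derivatives lam : lam <> 0 -> forall t,
  derivable_pt_lim (rem_y lam) t (rem_p lam t) /\
  derivable_pt_lim (rem_z lam) t (defect_z lam t) /\
  derivable_pt_lim (rem_p lam) t (defect_p lam t) /\
  derivable_pt_lim (rem_q lam) t (defect_q lam t).
Proof.
  intros Hlam t.
  destruct (rescaled_extremal _ _ _ _ _ _ _ (eta_pos lam Hlam) (proj1 (Hext lam Hlam)) t)
    as (dy & dz & dp & dq).
  destruct (H0 t) as (dY0 & dPY0 & dZ0 & dPZ0); destruct (H1 t) as (dY1 & dZ1 & dPY1 & dPZ1).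
  unfold rem_y, rem_z, rem_p, rem_q, defect_z, defect_p, defect_q, rescaled_y, rescaled_z,
    rescaled_q, scaled_dz0, scaled_dz1, scaled_dp0, scaled_dp1, scaled_dq1.
  repeat split; derive; ring.
Qed.

Lemma rem_energy_0 lam : 1 <= tau * lam -> rem_energy lam 0 = 0.
Proof.
  intros Hlam; destruct (eta_large lam Hlam) as (Hl0 & Heta & _ & Hq0).
  destruct (Hext lam Hl0) as (_ & Iy & Iz & Ip & Iq).
  destruct H0i as (I0y & I0z & I0p & I0q); destruct H1i as (I1y & I1z & I1p & I1q).
  unfold rem_energy, rem_y, rem_z, rem_p, rem_q, rescaled_y, rescaled_z, rescaled_q.
  rewrite !Rmult_0_r, Iy, Iz, Ip, Iq, Hq0, I0y, I0z, I0p, I0q, I1y, I1z, I1p, I1q.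
  field; lra.
Qed.

Lemma rem_energy_derivative lam : lam <> 0 -> forall t,
  derivable_pt_lim (rem_energy lam) t
    (2 * (rem_y lam t * rem_p lam t + rem_z lam t * defect_z lam t
          + rem_p lam t * defect_p lam t + rem_q lam t * defect_q lam t)).
Proof.
  intros Hlam t; pose proof (remainder_derivatives lam Hlam) as D.
  assert (dy : forall t, derivable_pt_lim (rem_y lam) t (rem_p lam t)) by apply D.
  assert (dz : forall t, derivable_pt_lim (rem_z lam) t (defect_z lam t)) by apply D.
  assert (dp : forall t, derivable_pt_lim (rem_p lam) t (defect_p lam t)) by apply D.
  assert (dq : forall t, derivable_pt_lim (rem_q lam) t (defect_q lam t)) by apply D.
  unfold rem_energy; derive; simpl; ring.
Qed.

(* The parameters [(lam, t)] range over a set on which the first-order calculus applies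
   uniformly, so that the constant [C] depends on neither [lam] nor [t]. *)
Lemma defect_bound S : 0 <= S -> exists C, 1 <= C /\ forall lam t,
  1 <= tau * lam -> 0 <= t <= S -> rem_energy lam t <= 1 ->
  Rabs (defect_z lam t) <= C * (rem_size lam t + eta lam ^ 2) /\
  Rabs (defect_p lam t) <= C * (rem_size lam t + eta lam ^ 2) /\
  Rabs (defect_q lam t) <= C * (rem_size lam t + eta lam ^ 2).
Proof.
  intros HS.
  set (D := fun i : R * R =>
              1 <= tau * fst i /\ 0 <= snd i <= S /\ rem_energy (fst i) (snd i) <= 1).
  set (n := fun i : R * R => eta (fst i)).
  set (rho := fun i : R * R => rem_size (fst i) (snd i)).
  assert (Hn : forall i, D i -> Rabs (n i) <= 1).
  { intros i (Hi & _); destruct (eta_large _ Hi) as (_ & Heta & _).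
    unfold n; rewrite Rabs_right; lra. }
  assert (Hrho : forall i, D i -> 0 <= rho i <= 4)
    by (intros i (_ & _ & HE); split; [apply rem_size_bounds | apply sum_abs_le_4, HE]).
  assert (Hbd : forall g g', (forall s, derivable_pt_lim g s (g' s)) ->
                  bounded_on _ D (fun i => g (snd i))).
  { intros g g' Hg; apply (bounded_on_continuous _ D snd g S HS (derivable_continuity _ _ Hg)).
    intros i (_ & Hi & _); exact Hi. }
  destruct (scaled_field_expansion _ D n rho Hn Hrho eps eps'
              (fun i => rescaled_y (fst i) (snd i)) (fun i => rescaled_z (fst i) (snd i))
              (fun i => rescaled_q (fst i) (snd i)) (fun i => Y0 (snd i)) (fun i => Z0 (snd i))
              (fun i => PZ0 (snd i)) (fun i => Y1 (snd i)) (fun i => Z1 (snd i))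
              (fun i => PZ1 (snd i)))
    as ([Cz HCz] & [Cp HCp] & [Cq HCq]);
    try (apply (expansion_of_bounded _ D n rho Hrho);
         [eapply Hbd; intro; apply H0 | eapply Hbd; intro; apply H1
         | intros i _; apply rem_size_bounds]).
  exists (1 + Rabs Cz + Rabs Cp + Rabs Cq); split.
  { pose proof (Rabs_pos Cz); pose proof (Rabs_pos Cp); pose proof (Rabs_pos Cq); lra. }
  intros lam t Hlam Ht HE.
  assert (Di : D (lam, t)) by (unfold D; cbn [fst snd]; auto).
  destruct (HCz _ Di) as (_ & _ & Bz); destruct (HCp _ Di) as (_ & _ & Bp);
    destruct (HCq _ Di) as (_ & _ & Bq).
  pose proof (Hrho _ Di); unfold n, rho in *; cbn [fst snd] in *.
  assert (Hx : 0 <= rem_size lam t + eta lam ^ 2) by (pose proof (pow2_ge_0 (eta lam)); lra).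
  pose proof (Rle_abs Cz); pose proof (Rle_abs Cp); pose proof (Rle_abs Cq);
    pose proof (Rabs_pos Cz); pose proof (Rabs_pos Cp); pose proof (Rabs_pos Cq).
  repeat split; (eapply Rle_trans; [eassumption | apply Rmult_le_compat_r; [exact Hx | lra]]).
Qed.

Lemma rem_energy_bound S : 0 <= S -> exists C0, 0 < C0 /\ forall lam,
  1 <= tau * lam -> C0 * eta lam ^ 2 < 1 ->
  forall t, 0 <= t <= S -> rem_energy lam t <= C0 * eta lam ^ 4.
Proof.
  intros HS; destruct (defect_bound S HS) as [C [HC HCb]].
  exists (exp (12 * C * S) / 12); split; [pose proof (exp_pos (12 * C * S)); lra|].
  intros lam Hlam Hsmall t Ht.
  destruct (eta_large lam Hlam) as (Hl0 & Heta & _).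
  replace (exp (12 * C * S) / 12 * eta lam ^ 4)
    with (C * eta lam ^ 4 / (12 * C) * exp (12 * C * S)) by (field; lra).
  eapply (gronwall_bootstrap (rem_energy lam) _ (12 * C) (C * eta lam ^ 4) 1 S); auto.
  - lra.
  - pose proof (pow_le (eta lam) 4 ltac:(lra)); nra.
  - apply rem_energy_0; auto.
  - replace (C * eta lam ^ 4 / (12 * C) * exp (12 * C * S))
      with (exp (12 * C * S) / 12 * eta lam ^ 2 * eta lam ^ 2) by (field; lra).
    assert (eta lam ^ 2 <= 1) by (rewrite <- (pow1 2); apply pow_incr; lra).
    pose proof (pow2_ge_0 (eta lam)); pose proof (exp_pos (12 * C * S)).
    assert (0 <= exp (12 * C * S) / 12 * eta lam ^ 2) by (apply Rmult_le_pos; lra).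
    nra.
  - exact (rem_energy_derivative lam Hl0).
  - intros s Hs HE; destruct (HCb lam s Hlam Hs HE) as (Bz & Bp & Bq).
    apply remainder_energy_ineq; auto.
Qed.

Lemma remainder_asymptotics S e : 0 <= S -> 0 < e -> exists M, forall lam, tau * lam > M ->
  forall s, 0 <= s <= S ->
    Rabs (rem_y lam s) <= e * eta lam /\ Rabs (rem_z lam s) <= e * eta lam.
Proof.
  intros HS He; destruct (rem_energy_bound S HS) as [C0 [HC0 HE]].
  exists (1 + C0 + C0 / e ^ 2); intros lam Hlam s Hs.
  assert (He2 : 0 < e ^ 2) by (apply pow_lt; lra).
  assert (HM : 0 < C0 / e ^ 2) by (apply Rdiv_lt_0_compat; lra).
  assert (Hlam1 : 1 <= tau * lam) by lra.
  destruct (eta_large lam Hlam1) as (_ & Heta & Hsq & _).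
  assert (Hpos : 0 < tau * lam) by lra.
  assert (HCe : C0 < e ^ 2 * (tau * lam)).
  { replace C0 with (e ^ 2 * (C0 / e ^ 2)) at 1 by (field; lra).
    apply Rmult_lt_compat_l; lra. }
  assert (HE' : rem_energy lam s <= (e * eta lam) ^ 2).
  { eapply Rle_trans; [apply HE; auto|].
    - rewrite Hsq, <- (Rinv_r (tau * lam)) by lra.
      apply Rmult_lt_compat_r; [apply Rinv_0_lt_compat|]; lra.
    - replace (C0 * eta lam ^ 4) with (C0 / (tau * lam) * eta lam ^ 2)
        by (unfold Rdiv; rewrite <- Hsq; ring).
      replace ((e * eta lam) ^ 2) with (e ^ 2 * eta lam ^ 2) by ring.
      apply Rmult_le_compat_r; [apply pow2_ge_0|].
      unfold Rdiv; apply (Rmult_le_reg_r (tau * lam)); [lra|].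
      rewrite Rmult_assoc, Rinv_l by lra; lra. }
  assert (Hroot : forall r, r ^ 2 <= (e * eta lam) ^ 2 -> Rabs r <= e * eta lam).
  { intros r Hr; rewrite <- (Rabs_right (e * eta lam)) by nra.
    apply Rsqr_le_abs_0; rewrite !Rsqr_pow2; exact Hr. }
  unfold rem_energy in HE'.
  pose proof (pow2_ge_0 (rem_y lam s)); pose proof (pow2_ge_0 (rem_z lam s));
    pose proof (pow2_ge_0 (rem_p lam s)); pose proof (pow2_ge_0 (rem_q lam s)).
  split; apply Hroot; lra.
Qed.

Lemma asymptotic_expansion :
  forall S : R, 0 < S -> forall e : R, 0 < e ->
    exists M : R, forall lam : R, tau * lam > M ->
      forall s : R, 0 <= s <= S ->
        let eta := / sqrt (Rabs lam) in
        Rabs (y lam (eta * s) - eta * Y0 s - eta ^ 2 * Y1 s) <= e * eta ^ 2 /\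
        Rabs (z lam (eta * s) - eta ^ 3 * Z0 s - eta ^ 4 * Z1 s) <= e * eta ^ 4.
Proof.
  intros S HS e He; destruct (remainder_asymptotics S e ltac:(lra) He) as [M HM].
  exists (Rmax 1 M); intros lam Hlam s Hs; cbv zeta; fold (eta lam).
  pose proof (Rmax_l 1 M); pose proof (Rmax_r 1 M).
  destruct (eta_large lam ltac:(lra)) as (_ & Heta & _).
  destruct (HM lam ltac:(lra) s Hs) as [Hy Hz].
  replace (y lam (eta lam * s) - eta lam * Y0 s - eta lam ^ 2 * Y1 s)
    with (eta lam * rem_y lam s) by (unfold rem_y, rescaled_y; field; lra).
  replace (z lam (eta lam * s) - eta lam ^ 3 * Z0 s - eta lam ^ 4 * Z1 s)
    with (eta lam ^ 3 * rem_z lam s) by (unfold rem_z, rescaled_z; field; lra).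
  pose proof (pow_lt (eta lam) 3 ltac:(lra)).
  rewrite !Rabs_mult, Rabs_right, (Rabs_right (eta lam ^ 3)) by lra.
  split; [replace (e * eta lam ^ 2) with (eta lam * (e * eta lam)) by ring
         | replace (e * eta lam ^ 4) with (eta lam ^ 3 * (e * eta lam)) by ring];
    apply Rmult_le_compat_l; lra.
Qed.

End Remainder.

Theorem proposition4 (eps eps' : R) (Heps : eps <> 0)
  (sigma tau : R) (Hsigma : sigma = 1 \/ sigma = -1) (Htau : tau = 1 \/ tau = -1)
  (y z py pz : R -> R -> R)
  (Hext : forall lam : R, lam <> 0 ->
     normal_extremal eps eps' (y lam) (z lam) (py lam) (pz lam) /\
     y lam 0 = 0 /\ z lam 0 = 0 /\ py lam 0 = sigma /\ pz lam 0 = lam)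
  (Y0 Z0 PY0 PZ0 Y1 Z1 PY1 PZ1 : R -> R)
  (H0 : order0_system Y0 Z0 PY0 PZ0)
  (H0i : Y0 0 = 0 /\ Z0 0 = 0 /\ PY0 0 = sigma /\ PZ0 0 = tau)
  (H1 : order1_system eps eps' Y0 Z0 PY0 PZ0 Y1 Z1 PY1 PZ1)
  (H1i : Y1 0 = 0 /\ Z1 0 = 0 /\ PY1 0 = 0 /\ PZ1 0 = 0) :
  (forall S : R, 0 < S -> forall e : R, 0 < e ->
     exists M : R, forall lam : R, tau * lam > M ->
       forall s : R, 0 <= s <= S ->
         let eta := / sqrt (Rabs lam) in
         Rabs (y lam (eta * s) - eta * Y0 s - eta ^ 2 * Y1 s) <= e * eta ^ 2 /\
         Rabs (z lam (eta * s) - eta ^ 3 * Z0 s - eta ^ 4 * Z1 s) <= e * eta ^ 4)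
  /\
  (forall s : R,
     Y0 s = - PY0 0 * sqrt 2 * cn (K + s) /\
     Z0 s = PZ0 s / 3 * (s + 2 * sn (K + s) * cn (K + s) * dn (K + s))).
Proof.
  split.
  - eapply asymptotic_expansion; eassumption.
  - destruct H0i as (HY0 & HZ0 & HPY0 & HPZ0).
    apply order0_closed_form; auto; [rewrite HPY0; destruct Hsigma | rewrite HPZ0; destruct Htau];
      subst; ring.
Qed.
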